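(* Let $r\ge4$, $l\ge r$, $k,\alpha,\beta\in\mathbb N$ with $\alpha+\beta+k(r-2)\equiv0\pmod l$ and $\gcd(k,\alpha,l)=\gcd(k,\beta,l)=1$; let $N_G=\mathbb Z^r+\mathbb Z\frac1l(k,\ldots,k,\alpha,\beta)^{\intercal}\subset\mathbb R^r$ ($k$ repeated $r-2$ times), $\mathfrak L=\{x\in\mathbb R^r:x_1=\cdots=x_{r-2}\}$ and $\overline{N_G}=N_G\cap\mathfrak L$. Let $n_1,n_2,n_3\in\overline{N_G}\setminus\{\mathbf 0\}$ be such that $\mathrm{pos}(n_1,n_2,n_3)$ is a $3$-dimensional basic cone w.r.t. $\overline{N_G}$. Then for every tuple of integers $1\le\xi_1<\xi_2<\cdots<\xi_{r-3}\le r-2$ the cone $\mathrm{pos}(n_1,n_2,n_3,e_{\xi_1},\ldots,e_{\xi_{r-3}})\subset\mathbb R^r$ is basic w.r.t. the lattice $N_G$.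
   Context: $e_1,\ldots,e_r$ are the standard unit vectors of $\mathbb R^r$. A simplicial cone generated by primitive lattice vectors is basic w.r.t. a lattice $N$ if its minimal generators form part of a $\mathbb Z$-basis of $N$ (here: a $\mathbb Z$-basis of $\overline{N_G}$, resp. of $N_G$). *)

(* Vectors of R^r with rational entries are 'rV[rat]_r
   (all vectors involved lie in Q^r). *)
From HB Require Import structures.
From mathcomp Require Import all_boot all_order all_algebra.
Unset Printing Implicit Defensive.
Import Order.TTheory GRing.Theory Num.Theory.
Local Open Scope ring_scope.

Definition lattice (r : nat) := 'rV[rat]_r -> Prop.

(* the vector (1/l)(k,...,k,alpha,beta), k repeated r-2 times (0-based
   coordinates 0..r-3 carry k, coordinate r-2 carries alpha, r-1 carries beta) *)
Definition gen_vec (r l k alpha beta : nat) : 'rV[rat]_r :=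
  \row_(i < r) ((if (i < r - 2)%N then k else if i == (r - 2)%N :> nat then alpha
                 else beta)%:R / l%:R).

Definition NG (r l k alpha beta : nat) : lattice r :=
  fun x => exists (z : 'rV[int]_r) (t : int),
    x = map_mx (fun a : int => a%:~R) z + t%:~R *: gen_vec r l k alpha beta.

Definition frakL (r : nat) (x : 'rV[rat]_r) : Prop :=
  forall i j : 'I_r, (i < r - 2)%N -> (j < r - 2)%N -> x 0 i = x 0 j.

Definition NGbar (r l k alpha beta : nat) : lattice r :=
  fun x => NG r l k alpha beta x /\ frakL r x.

Definition Zbasis (r : nat) (N : lattice r) (n : nat) (b : 'I_n -> 'rV[rat]_r) : Prop :=
  [/\ forall j, N (b j),
      row_free (\matrix_(j < n) b j) &
      forall x, N x -> exists c : 'I_n -> int, x = \sum_(j < n) (c j)%:~R *: b j].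

Definition primitive (r : nat) (N : lattice r) (p : 'rV[rat]_r) : Prop :=
  N p /\ forall lam : rat, 0 < lam < 1 -> ~ N (lam *: p).

(* the cone pos(u_1,...,u_m) is a simplicial cone (u linearly independent,
   so its rays are exactly the rays through the u_i) which is basic w.r.t. N:
   its minimal generators (the primitive vectors of N on the rays R_{>=0} u_i)
   form part of a Z-basis of N. *)
Definition basic_cone (r : nat) (N : lattice r) (m : nat) (u : 'I_m -> 'rV[rat]_r) : Prop :=
  row_free (\matrix_(i < m) u i) /\
  exists (p : 'I_m -> 'rV[rat]_r) (c : 'I_m -> rat),
    [/\ forall i, 0 < c i /\ u i = c i *: p i,
        forall i, primitive r N (p i) &
        exists (n : nat) (b : 'I_n -> 'rV[rat]_r) (f : 'I_m -> 'I_n),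
          [/\ Zbasis r N n b, injective f & forall i, b (f i) = p i]].

Definition unitv (r : nat) (j : 'I_r) : 'rV[rat]_r := \row_(i < r) (i == j)%:R.

Definition cone_family (r : nat) (nn : 'I_3 -> 'rV[rat]_r) (xi : 'I_(r - 3) -> 'I_r)
  : 'I_(3 + (r - 3)) -> 'rV[rat]_r :=
  fun i => match split i with inl a => nn a | inr b => unitv r (xi b) end.

(* Since L is 3-dimensional, a lattice in L has rank at most 3, so the Z-basis
   of N_G-bar extending the minimal generators p_1, p_2, p_3 of pos(n_1, n_2, n_3)
   is {p_1, p_2, p_3} itself.  All coordinates x_i, i < r-2, of a vector of N_G
   agree modulo Z.  Let j0 be the unique index below r-2 not among the xi's:
   subtracting the integer combination sum_b (x_(xi b) - x_j0) e_(xi b) moves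
   x in N_G into N_G cap L = N_G-bar, so p_1, p_2, p_3 and the e_(xi b) span N_G.
   They are independent because a vector of L vanishing at j0 vanishes at every
   xi b, and e_j is primitive since lam e_j in N_G forces
   lam = lam e_j(j) - lam e_j(j') in Z. *)

From HB Require Import structures.
From mathcomp Require Import all_boot all_order all_algebra.
From mathcomp Require Import zify ring.
Import Order.TTheory GRing.Theory Num.Theory.
Local Open Scope ring_scope.
Set Implicit Arguments.
Unset Strict Implicit.

Lemma mulmx_matrix_rows (F : fieldType) m n (u : 'rV[F]_m) (w : 'I_m -> 'rV[F]_n) :
  u *m (\matrix_i w i) = \sum_i u 0 i *: w i.
Proof. by rewrite mulmx_sum_row; apply: eq_bigr => i _; rewrite rowK. Qed.

Lemma row_free_scaled_rows (F : fieldType) m n (c : 'I_m -> F) (p : 'I_m -> 'rV[F]_n) :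
  row_free (\matrix_i (c i *: p i)) -> row_free (\matrix_i p i).
Proof.
have -> : \matrix_i (c i *: p i) = diag_mx (\row_i c i) *m \matrix_i p i.
  by apply/matrixP => i j; rewrite mul_diag_mx !mxE.
by move=> /eqP free; rewrite /row_free eqn_leq rank_leq_row -{1}free mxrankM_maxr.
Qed.

Definition zspan r m (w : 'I_m -> 'rV[rat]_r) (x : 'rV[rat]_r) :=
  exists c : 'I_m -> int, x = \sum_i (c i)%:~R *: w i.

Section ZSpan.
Variables (r m : nat) (w : 'I_m -> 'rV[rat]_r).

Lemma zspan_gen i : zspan w (w i).
Proof.
exists (fun j => (j == i)%:R); rewrite (bigD1 i) //= eqxx scale1r big1 ?addr0 //.
by move=> j /negbTE ->; rewrite scale0r.
Qed.

Lemma zspanD x y : zspan w x -> zspan w y -> zspan w (x + y).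
Proof.
move=> [c ->] [d ->]; exists (fun i => c i + d i); rewrite -big_split /=.
by apply: eq_bigr => i _; rewrite intrD scalerDl.
Qed.

Lemma zspan_sum n (c : 'I_n -> int) (v : 'I_n -> 'rV[rat]_r) :
  (forall j, zspan w (v j)) -> zspan w (\sum_j (c j)%:~R *: v j).
Proof.
move=> wv; apply: (big_ind (zspan w)); last first.
- move=> j _; have [d ->] := wv j; exists (fun i => c j * d i).
  by rewrite scaler_sumr; apply: eq_bigr => i _; rewrite intrM scalerA.
- exact: zspanD.
by exists (fun _ => 0); rewrite big1 // => i _; rewrite scale0r.
Qed.

Lemma zspan_trans n (v : 'I_n -> 'rV[rat]_r) x :
  (forall j, zspan w (v j)) -> zspan v x -> zspan w x.
Proof. by move=> wv [c ->]; apply: zspan_sum. Qed.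

End ZSpan.

Section FrakL.
Variable r : nat.

Lemma frakL_scale s x : frakL r x -> frakL r (s *: x).
Proof. by move=> xL i j ir jr; rewrite !mxE (xL i j). Qed.

Lemma frakL_lin n (s : 'I_n -> rat) (w : 'I_n -> 'rV[rat]_r) :
  (forall j, frakL r (w j)) -> frakL r (\sum_j s j *: w j).
Proof.
by move=> wL i i' ir i'r; rewrite !summxE; apply: eq_bigr => j _; rewrite !mxE (wL j i i').
Qed.

Hypothesis r3 : (3 <= r)%N.

Definition last3 (j : 'I_3) : 'I_r := cast_ord (subnK r3) (rshift (r - 3) j).

Lemma frakL_last3_eq0 x : frakL r x -> colsub last3 x = 0 -> x = 0.
Proof.
move=> xL /rowP x0; apply/rowP => i; rewrite mxE.
have last3_0 j : x 0 (last3 j) = 0 by have := x0 j; rewrite !mxE.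
have [lt_i | ge_i] := ltnP i (r - 3).
  by rewrite (xL i (last3 ord0)) ?last3_0 //=; lia.
have lt_j : (i - (r - 3) < 3)%N by have := ltn_ord i; lia.
rewrite -(last3_0 (Ordinal lt_j)); congr (x 0 _); apply: val_inj => /=; lia.
Qed.

Lemma frakL_row_free_le3 m (w : 'I_m -> 'rV[rat]_r) :
  (forall i, frakL r (w i)) -> row_free (\matrix_i w i) -> (m <= 3)%N.
Proof.
move=> wL w_free.
suff /eqP <- : row_free (colsub last3 (\matrix_i w i)) by exact: rank_leq_col.
apply/inj_row_free => u; rewrite mulmx_colsub => /frakL_last3_eq0 uw0.
apply/eqP; rewrite -(mulmx_free_eq0 u w_free); apply/eqP/uw0.
by rewrite mulmx_matrix_rows; apply: frakL_lin.
Qed.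

End FrakL.

Section UnitVectors.
Variables (r n : nat) (xi : 'I_n -> 'I_r) (s : 'I_n -> rat).

Lemma sum_unitv_img : injective xi ->
  forall b, (\sum_b' s b' *: unitv r (xi b')) 0 (xi b) = s b.
Proof.
move=> xi_inj b; rewrite summxE (bigD1 b) //= !mxE eqxx mulr1 big1 ?addr0 // => b' nb'.
by rewrite !mxE eq_sym (inj_eq xi_inj) (negbTE nb') mulr0.
Qed.

Lemma sum_unitv_out i : (forall b, xi b != i) -> (\sum_b s b *: unitv r (xi b)) 0 i = 0.
Proof.
by move=> xi_i; rewrite summxE big1 // => b _; rewrite !mxE eq_sym (negbTE (xi_i b)) mulr0.
Qed.

End UnitVectors.

Section LatticeNG.
Variables (r l k alpha beta : nat).
Local Notation NG := (NG r l k alpha beta).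

Lemma NG0 : NG 0.
Proof. by exists 0, 0; rewrite scale0r addr0; apply/matrixP => i j; rewrite !mxE. Qed.

Lemma NGD x y : NG x -> NG y -> NG (x + y).
Proof.
move=> [z [t ->]] [z' [t' ->]]; exists (z + z'), (t + t').
rewrite intrD scalerDl addrACA; congr (_ + _).
by apply/matrixP => i j; rewrite !mxE intrD.
Qed.

Lemma NGZ (c : int) x : NG x -> NG (c%:~R *: x).
Proof.
move=> [z [t ->]]; exists (c *: z), (c * t).
by rewrite scalerDr scalerA -intrM; congr (_ + _); apply/matrixP => i j; rewrite !mxE intrM.
Qed.

Lemma NG_sum n (c : 'I_n -> int) (v : 'I_n -> 'rV[rat]_r) :
  (forall j, NG (v j)) -> NG (\sum_j (c j)%:~R *: v j).
Proof. by move=> NGv; apply: big_ind; [exact: NG0 | exact: NGD | move=> j _; apply: NGZ]. Qed.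

Lemma NGB x y : NG x -> NG y -> NG (x - y).
Proof. by move=> NGx /(NGZ (-1)); rewrite scaleNr scale1r; apply: NGD. Qed.

Lemma NG_unitv j : NG (unitv r j).
Proof.
exists (\row_i (i == j)%:R), 0; rewrite scale0r addr0.
by apply/matrixP => i i'; rewrite !mxE; case: (i' == j).
Qed.

(* The generator of N_G has equal entries k/l in its first r-2 coordinates. *)
Lemma NG_coord_diff x : NG x -> exists z : 'rV[int]_r,
  forall i j : 'I_r, (i < r - 2)%N -> (j < r - 2)%N -> x 0 i - x 0 j = (z 0 i - z 0 j)%:~R.
Proof. by move=> [z [t ->]]; exists z => i j ir jr; rewrite !mxE ir jr intrB; ring. Qed.

Lemma unitv_primitive (j : 'I_r) : (4 <= r)%N -> (j < r - 2)%N -> primitive r NG (unitv r j).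
Proof.
move=> r4 jr; split => [|lam /andP [lam_gt0 lam_lt1] /NG_coord_diff [z z_diff]].
  exact: NG_unitv.
have [j' [j'r j'_neq]] : exists j' : 'I_r, (j' < r - 2)%N /\ j' != j.
  have r0 : (0 < r)%N by lia.
  have r1 : (1 < r)%N by lia.
  case: (eqVneq j (Ordinal r0)) => [-> | j_neq].
    by exists (Ordinal r1); split; [rewrite /=; lia | apply/eqP => /(congr1 val)].
  by exists (Ordinal r0); rewrite eq_sym; split => //=; lia.
have := z_diff j j' jr j'r; rewrite !mxE eqxx (negbTE j'_neq) mulr1 mulr0 subr0 => lam_int.
by move: lam_gt0 lam_lt1; rewrite lam_int ltr0z ltrz1; lia.
Qed.

End LatticeNG.

Lemma primitive_meet_frakL r (N : lattice r) p :
  primitive r (fun x => N x /\ frakL r x) p -> primitive r N p.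
Proof.
move=> [[Np pL] p_prim]; split => // lam lam_range Nlamp.
by apply: (p_prim lam lam_range); split => //; apply: frakL_scale.
Qed.

Lemma Zbasis_frakL_span r (N : lattice r) n (b : 'I_n -> 'rV[rat]_r)
    (p : 'I_3 -> 'rV[rat]_r) (f : 'I_3 -> 'I_n) :
  (3 <= r)%N -> (forall x, N x -> frakL r x) -> Zbasis r N n b ->
  injective f -> (forall i, b (f i) = p i) -> forall x, N x -> zspan p x.
Proof.
move=> r3 NL [Nb b_free b_span] f_inj bf x /b_span [c ->].
have n_le3 : (n <= 3)%N by apply: (frakL_row_free_le3 r3 _ b_free) => j; apply/NL/Nb.
apply: zspan_sum => j.
have /codomP [i ->] : j \in codom f by apply: inj_card_onto; rewrite ?card_ord.
by rewrite bf; apply: zspan_gen.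
Qed.

Lemma missing_index r (xi : 'I_(r - 3) -> 'I_r) : (3 <= r)%N -> injective xi ->
    (forall b, xi b < r - 2)%N ->
  exists j0 : 'I_r, [/\ (j0 < r - 2)%N, forall b, xi b != j0 &
    forall i : 'I_r, (i < r - 2)%N -> i != j0 -> exists b, xi b = i].
Proof.
move=> r3 xi_inj xi_lt.
pose S := [set i : 'I_r | (i < r - 2)%N].
pose I := [set xi b | b in 'I_(r - 3)].
have card_S : #|S| = (r - 2)%N.
  have widen_inj : injective (widen_ord (leq_subr 2 r)).
    by move=> a b /(congr1 val) /= /val_inj.
  rewrite -(card_ord (r - 2)) -(card_imset _ widen_inj).
  apply/eq_card => i; rewrite inE; apply/idP/imsetP => [ir | [j _ ->] /=]; last exact: ltn_ord.
  by exists (Ordinal ir) => //; apply: val_inj.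
have card_I : #|I| = (r - 3)%N by rewrite card_imset // card_ord.
have I_sub_S : I \subset S by apply/subsetP => _ /imsetP [b _ ->]; rewrite inE.
have /cards1P [j0 S_minus_I] : #|S :\: I| == 1%N.
  by rewrite cardsD (setIidPr I_sub_S) card_S card_I; apply/eqP; lia.
have := set11 j0; rewrite -S_minus_I !inE => /andP [j0_notin_I j0r].
exists j0; split => // [b | i ir i_neq].
  by apply: contraNneq j0_notin_I => <-; apply: imset_f.
have : i \notin S :\: I by rewrite S_minus_I inE.
by rewrite !inE ir andbT negbK => /imsetP [b _ ->]; exists b.
Qed.

Section ConeFamily.
Variables (r : nat) (xi : 'I_(r - 3) -> 'I_r) (j0 : 'I_r).
Hypotheses (xi_inj : injective xi) (xi_lt : forall b, (xi b < r - 2)%N).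
Hypotheses (j0_lt : (j0 < r - 2)%N) (xi_neq_j0 : forall b, xi b != j0).
Hypothesis xi_onto : forall i : 'I_r, (i < r - 2)%N -> i != j0 -> exists b, xi b = i.

Lemma cone_family_lshift w a : cone_family r w xi (lshift (r - 3) a) = w a.
Proof. by rewrite /cone_family (unsplitK (inl a)). Qed.

Lemma cone_family_rshift w b : cone_family r w xi (rshift 3 b) = unitv r (xi b).
Proof. by rewrite /cone_family (unsplitK (inr b)). Qed.

Lemma cone_family_col_mx w :
  \matrix_i cone_family r w xi i = col_mx (\matrix_a w a) (\matrix_b unitv r (xi b)).
Proof. by apply/matrixP => i j; rewrite !mxE /cone_family; case: split => ?; rewrite mxE. Qed.

Lemma cone_family_row_free w : (forall a, frakL r (w a)) -> row_free (\matrix_a w a) ->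
  row_free (\matrix_i cone_family r w xi i).
Proof.
move=> wL w_free; rewrite cone_family_col_mx; apply/inj_row_free => u.
rewrite -[u]hsubmxK mul_row_col !mulmx_matrix_rows.
set y := \sum_a _; set z := \sum_b _ => yz0.
have y_eq : y = - z by apply/eqP; rewrite -addr_eq0 yz0.
have ur0 : rsubmx u = 0.
  apply/rowP => b; rewrite [RHS]mxE -(sum_unitv_img _ xi_inj) -/z -[z]opprK -y_eq mxE.
  have yL : frakL r y by apply: frakL_lin.
  by rewrite (yL _ j0) // y_eq !mxE sum_unitv_out // oppr0 opprK.
have y0 : y = 0 by rewrite y_eq /z big1 ?oppr0 // => b _; rewrite ur0 mxE scale0r.
have ul0 : lsubmx u = 0.
  by apply/eqP; rewrite -(mulmx_free_eq0 _ w_free) mulmx_matrix_rows; apply/eqP.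
by rewrite ul0 ur0 row_mx0.
Qed.

Lemma NG_zspan_cone_family l k alpha beta (p : 'I_3 -> 'rV[rat]_r) :
  (forall x, NGbar r l k alpha beta x -> zspan p x) ->
  forall x, NG r l k alpha beta x -> zspan (cone_family r p xi) x.
Proof.
move=> p_span x NGx; have [z z_diff] := NG_coord_diff NGx.
set s := \sum_b (z 0 (xi b) - z 0 j0)%:~R *: unitv r (xi b).
have NGbar_xs : NGbar r l k alpha beta (x - s).
  split; first by apply: NGB => //; apply: NG_sum => b; apply: NG_unitv.
  suff xs_j0 (i : 'I_r) : (i < r - 2)%N -> (x - s) 0 i = x 0 j0.
    by move=> i j ir jr; rewrite !xs_j0.
  move=> ir; rewrite !mxE; case: (eqVneq i j0) => [-> | /(xi_onto ir) [b <-]].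
    by rewrite sum_unitv_out // subr0.
  by rewrite sum_unitv_img // -z_diff // opprB addrC subrK.
rewrite -(subrK s x); apply: zspanD.
  apply: zspan_trans (p_span _ NGbar_xs) => a.
  by rewrite -(cone_family_lshift p a); apply: zspan_gen.
by apply: zspan_sum => b; rewrite -(cone_family_rshift p b); apply: zspan_gen.
Qed.

Lemma cone_family_Zbasis l k alpha beta (p : 'I_3 -> 'rV[rat]_r) :
  (forall a, NGbar r l k alpha beta (p a)) -> row_free (\matrix_a p a) ->
  (forall x, NGbar r l k alpha beta x -> zspan p x) ->
  Zbasis r (NG r l k alpha beta) (3 + (r - 3)) (cone_family r p xi).
Proof.
move=> NGbar_p p_free p_span; split.
- move=> i; rewrite /cone_family; case: split => [a | b]; last exact: NG_unitv.
  by case: (NGbar_p a).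
- by apply: cone_family_row_free => // a; case: (NGbar_p a).
- exact: NG_zspan_cone_family.
Qed.

Lemma cone_family_primitive l k alpha beta (p : 'I_3 -> 'rV[rat]_r) : (4 <= r)%N ->
  (forall a, primitive r (NGbar r l k alpha beta) (p a)) ->
  forall i, primitive r (NG r l k alpha beta) (cone_family r p xi i).
Proof.
move=> r4 p_prim i; rewrite /cone_family; case: split => [a | b].
  exact: primitive_meet_frakL (p_prim a).
exact: unitv_primitive.
Qed.

End ConeFamily.

Theorem lemma6p6 (r l k alpha beta : nat)
  (hr : (4 <= r)%N) (hl : (r <= l)%N)
  (hmod : ((alpha + beta + k * (r - 2)) %% l = 0)%N)
  (hga : gcdn (gcdn k alpha) l = 1%N) (hgb : gcdn (gcdn k beta) l = 1%N)
  (nn : 'I_3 -> 'rV[rat]_r)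
  (hn : forall i, NGbar r l k alpha beta (nn i) /\ nn i != 0)
  (hbasic : basic_cone r (NGbar r l k alpha beta) 3 nn)
  (xi : 'I_(r - 3) -> 'I_r)
  (hxi_inc : forall a b : 'I_(r - 3), (a < b)%N -> (xi a < xi b)%N)
  (hxi_rng : forall a, (xi a < r - 2)%N) :
  basic_cone r (NG r l k alpha beta) (3 + (r - 3)) (cone_family r nn xi).
Proof.
have r3 : (3 <= r)%N by lia.
have xi_inj : injective xi.
  move=> a b xi_ab; apply/val_inj.
  by case: (ltngtP a b) => // /hxi_inc; rewrite xi_ab ltnn.
have [j0 [j0_lt xi_neq_j0 xi_onto]] := missing_index r3 xi_inj hxi_rng.
case: hbasic => nn_free [p [c [nn_cp p_prim [n [b [f [b_basis f_inj bf]]]]]]].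
have NGbar_p a : NGbar r l k alpha beta (p a) by case: (p_prim a).
have p_free : row_free (\matrix_a p a).
  apply: (row_free_scaled_rows (c := c)).
  have -> : \matrix_a (c a *: p a) = \matrix_a nn a.
    by apply/matrixP => a j; rewrite !mxE; case: (nn_cp a) => _ ->; rewrite mxE.
  exact: nn_free.
have NGbar_L x : NGbar r l k alpha beta x -> frakL r x by case.
have p_span := Zbasis_frakL_span r3 NGbar_L b_basis f_inj bf.
split.
  by apply: (cone_family_row_free xi_inj hxi_rng j0_lt) => // a; case: (hn a) => -[].
exists (cone_family r p xi), (fun i => if split i is inl a then c a else 1); split.
- move=> i; rewrite /cone_family; case: split => [a | j]; first exact: nn_cp.
  by rewrite ltr01 scale1r.
- exact: (cone_family_primitive hxi_rng hr p_prim).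
- exists (3 + (r - 3))%N, (cone_family r p xi), id; split => //.
  exact: (cone_family_Zbasis xi_inj hxi_rng j0_lt xi_neq_j0 xi_onto NGbar_p p_free p_span).
Qed.
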